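(* Let $N \ge 1$ be an integer and let $0 < \delta < \frac{1}{N}$. For $\alpha > 0$, let $Q_{\vec{p}^*(\alpha)}:\mathbb{R}\to\mathbb{R}$ be the $N$-level scalar quantizer that maps each $x \in \mathbb{R}$ to the nearest point of $\{\frac{(2k-1)\alpha}{2N} : k = 1,\dots,N\}$. Equivalently, it partitions $(0,\alpha)$ into $N$ consecutive intervals of equal length $\alpha/N$ and reconstructs each cell by its midpoint; points below $0$ go to the first midpoint and points above $\alpha$ go to the last midpoint. For an $N$-level scalar quantizer $Q$ (a measurable map $\mathbb{R}\to\mathbb{R}$ whose range consists of $N$ points), define $$D(\alpha, Q) := \mathbb{E}_{X\sim \mathrm{Unif}(0,\alpha)}\big[(X-Q(X))^2\big], \qquad V(Q) := \max_{\alpha \in \{1, 1+\delta\}} D(\alpha, Q).$$ Then $$V\big(Q_{\vec{p}^*(1+\delta)}\big) < V\big(Q_{\vec{p}^*(1)}\big).$$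
   Context: $\mathrm{Unif}(0,\alpha)$ denotes the uniform distribution on $(0,\alpha)$. $D(\alpha,Q)$ is the expected squared-error distortion of quantizer $Q$ on the source $\mathrm{Unif}(0,\alpha)$. $V(Q)$ is the worst-case distortion over the two sources $\mathrm{Unif}(0,1)$ and $\mathrm{Unif}(0,1+\delta)$. *)

From Stdlib Require Import Reals ZArith.
From Coquelicot Require Import Coquelicot.
Open Scope R_scope.

(* Floor of a real number: Int_part r = up r - 1 = floor r. *)
(* Index (0-based) of the uniform cell of (0,alpha) containing x, clamped to
   {0,...,N-1}: points below 0 go to cell 0, points above alpha to cell N-1. *)
Definition cell_index (N : nat) (alpha x : R) : Z :=
  Z.max 0 (Z.min (Z.of_nat N - 1) (Int_part (x * INR N / alpha))).

(* The N-level uniform quantizer Q_{p*(alpha)}: reconstructs cell k (0-based)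
   by its midpoint (2(k+1)-1) alpha / (2N) = (2k+1) alpha / (2N). *)
Definition Qstar (N : nat) (alpha : R) (x : R) : R :=
  (2 * IZR (cell_index N alpha x) + 1) * alpha / (2 * INR N).

(* D(alpha, Q) = E_{X ~ Unif(0,alpha)} [(X - Q X)^2]
              = (1/alpha) * int_0^alpha (x - Q x)^2 dx. *)
Definition Dist (alpha : R) (Q : R -> R) : R :=
  RInt (fun x => (x - Q x) ^ 2) 0 alpha / alpha.

Definition Vworst (delta : R) (Q : R -> R) : R :=
  Rmax (Dist 1 Q) (Dist (1 + delta) Q).

(** With cell width [w = α/N], the quantizer [Qstar N α] has squared error
    [w²/12] per unit length on [(0, α)], and every point beyond [α] is
    reconstructed by the last midpoint [α - w/2].  Hence for [β ≥ α - w]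
    the error integral over [(0, β)] is the polynomial
    [α w²/12 + ((β - α + w/2)³ - (w/2)³)/3].  Writing [e = 1/N] and
    [a = 1 + δ], the distortions [D(1, Q_a)], [D(a, Q_a)] and [D(a, Q_1)]
    are explicit, and [V(Q_a) < D(a, Q_1) ≤ V(Q_1)] reduces to two
    polynomial inequalities valid for [0 < δ < e ≤ 1]. *)

From Stdlib Require Import Reals ZArith Lra Lia Psatz.
From Coquelicot Require Import Coquelicot.
Open Scope R_scope.

Lemma Int_part_scaled (n alpha x : R) (j : Z) : 0 < alpha -> 0 < n ->
  IZR j * (alpha / n) < x < (IZR j + 1) * (alpha / n) ->
  Int_part (x * n / alpha) = j.
Proof.
  intros Ha Hn [Hlo Hhi].
  assert (Hw : 0 < alpha / n) by (apply Rdiv_lt_0_compat; lra).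
  assert (Hx : x = x * n / alpha * (alpha / n)) by (field; lra).
  rewrite Hx in Hlo, Hhi.
  apply Rmult_lt_reg_r in Hlo, Hhi; try lra.
  symmetry; apply Int_part_spec; lra.
Qed.

Lemma cell_index_inner (N : nat) (alpha x : R) (j : nat) : 0 < alpha -> (j < N)%nat ->
  INR j * (alpha / INR N) < x < (INR j + 1) * (alpha / INR N) ->
  cell_index N alpha x = Z.of_nat j.
Proof.
  intros Ha Hj Hx.
  assert (Hn : 0 < INR N) by (apply lt_0_INR; lia).
  unfold cell_index.
  rewrite (Int_part_scaled (INR N) alpha x (Z.of_nat j)) by (try rewrite <- INR_IZR_INZ; lra).
  lia.
Qed.

Lemma cell_index_last (N : nat) (alpha x : R) : 0 < alpha -> (1 <= N)%nat ->
  (INR N - 1) * (alpha / INR N) < x -> cell_index N alpha x = (Z.of_nat N - 1)%Z.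
Proof.
  intros Ha HN Hx.
  assert (Hn : 0 < INR N) by (apply lt_0_INR; lia).
  assert (Hy : INR N - 1 < x * INR N / alpha).
  { apply (Rmult_lt_reg_r (alpha / INR N)); [apply Rdiv_lt_0_compat; lra|].
    replace (x * INR N / alpha * (alpha / INR N)) with x by (field; lra). lra. }
  assert (Hfloor : (Z.of_nat N - 2 < Int_part (x * INR N / alpha))%Z).
  { destruct (base_Int_part (x * INR N / alpha)).
    apply lt_IZR. rewrite minus_IZR, <- INR_IZR_INZ. lra. }
  unfold cell_index. lia.
Qed.

Lemma is_RInt_sq_shift (c p q : R) :
  is_RInt (fun x => (x - c) ^ 2) p q (((q - c) ^ 3 - (p - c) ^ 3) / 3).
Proof.
  replace (((q - c) ^ 3 - (p - c) ^ 3) / 3) with (minus ((q - c) ^ 3 / 3) ((p - c) ^ 3 / 3))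
    by (unfold minus, plus, opp; simpl; field).
  apply (is_RInt_derive (fun x => (x - c) ^ 3 / 3)).
  - intros x _. auto_derive; [easy | field].
  - intros x _. apply (ex_derive_continuous (fun x => (x - c) ^ 2)). auto_derive. easy.
Qed.

Lemma is_RInt_Chasles_R (f : R -> R) (a b c l1 l2 : R) :
  is_RInt f a b l1 -> is_RInt f b c l2 -> is_RInt f a c (l1 + l2).
Proof. exact (is_RInt_Chasles f a b c l1 l2). Qed.

Definition Qstar_sq_err (alpha w beta : R) : R :=
  alpha * w ^ 2 / 12 + ((beta - alpha + w / 2) ^ 3 - (w / 2) ^ 3) / 3.

Section UniformQuantizer.

Variables (N : nat) (alpha : R).
Hypotheses (HN : (1 <= N)%nat) (Ha : 0 < alpha).

Let w := alpha / INR N.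

Let Hn : 0 < INR N.
Proof. apply lt_0_INR; lia. Qed.

Let Hw : 0 < w.
Proof. apply Rdiv_lt_0_compat; lra. Qed.

Lemma is_RInt_Qstar_cells (k : nat) : (k <= N)%nat ->
  is_RInt (fun x => (x - Qstar N alpha x) ^ 2) 0 (INR k * w) (INR k * w ^ 3 / 12).
Proof.
  induction k as [|k IH]; intros Hk.
  - replace (INR 0 * w) with 0 by (simpl; ring).
    replace (INR 0 * w ^ 3 / 12) with 0 by (simpl; field).
    exact (is_RInt_point _ 0).
  - set (c := (INR k + /2) * w).
    replace (INR (S k) * w ^ 3 / 12)
      with (INR k * w ^ 3 / 12 + ((INR (S k) * w - c) ^ 3 - (INR k * w - c) ^ 3) / 3)
      by (rewrite S_INR; unfold c; field).
    apply is_RInt_Chasles_R with (INR k * w); [apply IH; lia|].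
    apply (is_RInt_ext (fun x => (x - c) ^ 2)); [|apply is_RInt_sq_shift].
    intros x Hx; change ((x - c) ^ 2 = (x - Qstar N alpha x) ^ 2).
    assert (Hk0 := pos_INR k).
    rewrite S_INR, Rmin_left, Rmax_right in Hx by nra.
    unfold Qstar. rewrite (cell_index_inner N alpha x k) by (auto; lia).
    rewrite <- INR_IZR_INZ. unfold c, w. field. lra.
Qed.

Lemma is_RInt_Qstar_sq_err (beta : R) : alpha - w <= beta ->
  is_RInt (fun x => (x - Qstar N alpha x) ^ 2) 0 beta (Qstar_sq_err alpha w beta).
Proof.
  intros Hb.
  assert (Hlast : (INR N - 1) * w = alpha - w) by (unfold w; field; lra).
  assert (HNm1 : INR (N - 1) = INR N - 1) by (rewrite minus_INR by lia; reflexivity).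
  set (c := alpha - w / 2).
  replace (Qstar_sq_err alpha w beta)
    with (INR (N - 1) * w ^ 3 / 12 + ((beta - c) ^ 3 - (INR (N - 1) * w - c) ^ 3) / 3)
    by (rewrite HNm1; unfold Qstar_sq_err, c, w; field; lra).
  apply is_RInt_Chasles_R with (INR (N - 1) * w); [apply is_RInt_Qstar_cells; lia|].
  apply (is_RInt_ext (fun x => (x - c) ^ 2)); [|apply is_RInt_sq_shift].
  intros x Hx; change ((x - c) ^ 2 = (x - Qstar N alpha x) ^ 2).
  rewrite HNm1, Hlast, Rmin_left in Hx by lra.
  unfold Qstar. rewrite cell_index_last by (auto; fold w; lra).
  rewrite minus_IZR, <- INR_IZR_INZ. unfold c, w. simpl. field. lra.
Qed.

Lemma Dist_Qstar (beta : R) : 0 < beta -> alpha - w <= beta ->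
  Dist beta (Qstar N alpha) = Qstar_sq_err alpha w beta / beta.
Proof.
  intros Hb Hlast. unfold Dist.
  now rewrite (is_RInt_unique _ _ _ _ (is_RInt_Qstar_sq_err beta Hlast)).
Qed.

End UniformQuantizer.

Lemma Qstar_sq_err_matched_lt (delta e : R) : 0 < delta < e -> e <= 1 ->
  Qstar_sq_err (1 + delta) ((1 + delta) * e) (1 + delta) < Qstar_sq_err 1 e (1 + delta).
Proof.
  intros [Hd Hde] He. apply Rlt_0_minus.
  replace (Qstar_sq_err 1 e (1 + delta) - Qstar_sq_err (1 + delta) ((1 + delta) * e) (1 + delta))
    with (delta ^ 3 * (4 - e ^ 2) / 12 + delta ^ 2 * e * (2 - e) / 4)
    by (unfold Qstar_sq_err; field).
  assert (0 < delta ^ 3) by (apply pow_lt; lra).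
  assert (0 < delta ^ 2 * e) by (apply Rmult_lt_0_compat; [apply pow_lt|]; lra).
  assert (0 < 4 - e ^ 2) by nra.
  apply Rplus_lt_0_compat; apply Rdiv_lt_0_compat; nra.
Qed.

Lemma Qstar_sq_err_oversized_lt (delta e : R) : 0 < delta < e -> e <= 1 ->
  (1 + delta) * Qstar_sq_err (1 + delta) ((1 + delta) * e) 1 < Qstar_sq_err 1 e (1 + delta).
Proof.
  intros [Hd Hde] He. apply Rlt_0_minus.
  replace (Qstar_sq_err 1 e (1 + delta) - (1 + delta) * Qstar_sq_err (1 + delta) ((1 + delta) * e) 1)
    with (delta * (e ^ 2 * (2 + 3 * delta + 5 * delta ^ 2 + 2 * delta ^ 3)
                   - 2 * delta ^ 2 * (2 + delta) * (3 * e - 2)) / 12)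
    by (unfold Qstar_sq_err; field).
  apply Rdiv_lt_0_compat; [|lra].
  apply Rmult_lt_0_compat; [lra|].
  assert (H1 : 2 * delta ^ 2 * (2 + delta) * (3 * e - 2) <= 2 * delta ^ 2 * (2 + delta) * e).
  { apply Rmult_le_compat_l; [|lra]. apply Rmult_le_pos; nra. }
  assert (H2 : 0 < delta * e * (e - delta)) by (repeat apply Rmult_lt_0_compat; lra).
  assert (H3 : 0 < e ^ 2 * (2 - delta + 3 * delta ^ 2 + 2 * delta ^ 3)) by (apply Rmult_lt_0_compat; nra).
  nra.
Qed.

Theorem lemma2 (N : nat) (delta : R) :
  (1 <= N)%nat -> 0 < delta -> delta < 1 / INR N ->
  Vworst delta (Qstar N (1 + delta)) < Vworst delta (Qstar N 1).
Proof.
  intros HN Hd Hdn. unfold Vworst.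
  assert (Hn : 1 <= INR N) by (apply (le_INR 1); lia).
  set (a := 1 + delta); set (e := / INR N).
  assert (Ha : 0 < a) by (unfold a; lra).
  assert (He : 0 < e <= 1).
  { split; [apply Rinv_0_lt_compat; lra|].
    rewrite <- Rinv_1. apply Rinv_le_contravar; lra. }
  assert (Hde : delta < e) by (unfold e, Rdiv in *; lra).
  assert (H1a : 1 - 1 * e <= a) by (unfold a; lra).
  assert (Ha1 : a - a * e <= 1) by (unfold a; nra).
  assert (Haa : a - a * e <= a) by nra.
  rewrite (Dist_Qstar N 1 HN Rlt_0_1 a Ha H1a), (Dist_Qstar N a HN Ha 1 Rlt_0_1 Ha1),
    (Dist_Qstar N a HN Ha a Ha Haa).
  change (1 / INR N) with (1 * e); change (a / INR N) with (a * e); rewrite Rmult_1_l.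
  apply Rlt_le_trans with (Qstar_sq_err 1 e a / a); [|apply Rmax_r].
  apply Rmax_lub_lt.
  - apply (Rmult_lt_reg_l a); [exact Ha|].
    replace (a * (Qstar_sq_err 1 e a / a)) with (Qstar_sq_err 1 e a) by (field; lra).
    rewrite Rdiv_1_r. now apply Qstar_sq_err_oversized_lt.
  - apply Rmult_lt_compat_r; [now apply Rinv_0_lt_compat|].
    now apply Qstar_sq_err_matched_lt.
Qed.
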